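(* Let $\Lambda_2,\Lambda_3,\Lambda_4\in\mathbb C$ with $\Lambda_4\ne0$, and let $\mathcal V^{[2]}$ be the Virasoro Whittaker module (any central charge) generated by $|J\rangle$ with $L_n|J\rangle=\Lambda_n|J\rangle$ for $n=2,3,4$ and $L_n|J\rangle=0$ for $n>4$. Consider formal power series $|\Psi\rangle=\sum_{k\ge0}\Lambda_5^k|\Psi_k\rangle$ with $|\Psi_0\rangle=|J\rangle$ and $|\Psi_k\rangle\in\mathcal V^{[2]}$ independent of the formal variable $\Lambda_5$, satisfying $L_n|\Psi\rangle=\Lambda_n|\Psi\rangle$ for $n=3,4,5$ and $L_n|\Psi\rangle=0$ for $n>5$. Then: (1) such a vector $|\Psi\rangle$ exists; (2) one can take $|\Psi_k\rangle\in U_{3k}$ for every $k\in\mathbb N$ (in fact this holds for the solution below); (3) $|\Psi\rangle$ is unique under the orthogonal gauge condition $\xi(|\Psi_k\rangle)=\delta_{k,0}$ for all $k\ge0$, and this unique solution satisfies $|\Psi_k\rangle\in U_{3k}$.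
   Context: Basis of $\mathcal V^{[2]}$: $v_\lambda=\mathbf L_{-\lambda}|J\rangle$, $\mathbf L_{-\lambda}=L_{-\lambda_1+2}\cdots L_{-\lambda_\ell+2}$, for partitions $\lambda=(\lambda_1\ge\dots\ge\lambda_\ell\ge1)$, with $v_\emptyset=|J\rangle$. Degree: $\deg v_\lambda=|\lambda|=\sum_i\lambda_i$; $U_m=\operatorname{span}\{v_\lambda:|\lambda|\le m\}$. The linear functional $\xi$ on $\mathcal V^{[2]}$ takes the coefficient of $v_\emptyset=|J\rangle$ in the expansion in the basis $\{v_\lambda\}$. The relations on $|\Psi\rangle$ hold order by order in $\Lambda_5$. *)

From HB Require Import structures.
From mathcomp Require Import all_boot all_order all_algebra.
From mathcomp Require Import complex.
From mathcomp Require Import reals.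
Set Implicit Arguments. Unset Strict Implicit. Unset Printing Implicit Defensive.
Import Order.TTheory GRing.Theory Num.Theory.
Local Open Scope ring_scope.

Section Defs.
Variables (C : fieldType) (V : lmodType C).

Definition is_partition (la : seq nat) : bool :=
  sorted (fun a b => (b <= a)%N) la && all (fun p => (0 < p)%N) la.

Definition vlam (L : int -> V -> V) (J : V) (la : seq nat) : V :=
  foldr (fun p v => L (2%:Z - p%:Z) v) J la.

Definition virasoro_rel (c : C) (L : int -> V -> V) : Prop :=
  forall (m n : int) (v : V),
    L m (L n v) - L n (L m v) =
      (m - n)%:~R *: L (m + n) v
      + (if m + n == 0 then c / 12%:R * (m ^+ 3 - m)%:~R else 0) *: v.

Definition pbw_basis (L : int -> V -> V) (J : V) : Prop :=
  (forall v : V, exists s : seq (seq nat * C),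
      all (fun p => is_partition p.1) s /\
      v = \sum_(p <- s) p.2 *: vlam L J p.1)
  /\
  (forall (s : seq (seq nat)) (a : seq nat -> C),
      uniq s -> all is_partition s ->
      \sum_(la <- s) a la *: vlam L J la = 0 ->
      forall la, la \in s -> a la = 0).

Definition in_span (L : int -> V -> V) (J : V) (P : pred (seq nat)) (v : V) : Prop :=
  exists s : seq (seq nat * C),
    all (fun p => is_partition p.1 && P p.1) s /\
    v = \sum_(p <- s) p.2 *: vlam L J p.1.

Definition in_U (L : int -> V -> V) (J : V) (m : nat) (v : V) : Prop :=
  in_span L J (fun la => (sumn la <= m)%N) v.

(* xi(v) = a : the coefficient of v_emptyset = |J> in v is a, i.e.
   v - a |J> lies in the span of the v_lambda with lambda nonempty *)
Definition xi_is (L : int -> V -> V) (J : V) (v : V) (a : C) : Prop :=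
  in_span L J (fun la => la != [::]) (v - a *: J).

(* |Psi> = sum_k Lambda_5^k Psi_k solves, order by order in Lambda_5,
   L_n Psi = Lambda_n Psi (n = 3,4,5), L_n Psi = 0 (n > 5), with Psi_0 = |J>. *)
Definition solves (L : int -> V -> V) (J : V) (La3 La4 : C) (Psi : nat -> V) : Prop :=
  Psi 0%N = J /\
  (forall k, L 3%:Z (Psi k) = La3 *: Psi k) /\
  (forall k, L 4%:Z (Psi k) = La4 *: Psi k) /\
  (forall k, L 5%:Z (Psi k) = if k is k'.+1 then Psi k' else 0) /\
  (forall (n : int) k, 5%:Z < n -> L n (Psi k) = 0).

End Defs.

From HB Require Import structures.
From mathcomp Require Import all_boot all_order all_algebra.
From mathcomp Require Import complex reals zify ring.
From Stdlib Require Import ClassicalEpsilon.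
Import Order.TTheory GRing.Theory Num.Theory.
Local Open Scope ring_scope.
Set Implicit Arguments. Unset Strict Implicit. Unset Printing Implicit Defensive.

(** Write [rho n = L n - Lam n], where [Lam n] is the eigenvalue of [L n] on
    |J> (zero outside 2 <= n <= 4), and filter the module by the PBW degree.
    The creation operator [L (2 - p)] raises the degree by [p] and [rho n]
    lowers it by [n - 2]; the Euler operator [\sum_j L (2 - j) (rho (j + 2))]
    acts on the top-degree part of a vector of degree [m] as multiplication by
    [2 La4 m]. Since [La4 != 0], a Whittaker vector ([rho n v = 0] for all
    [n >= 3]) therefore has degree 0, i.e. is a multiple of |J>: this gives
    uniqueness under the gauge [xi].
    At order [k + 1] we need [Psi (k + 1)] with [rho n (Psi (k + 1))] equal to
    [Psi k] for [n = 5] and to 0 for the other [n >= 3]. The right-hand side is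
    a cocycle for [rho m (rho n) - rho n (rho m) = (m - n) rho (m + n)], and a
    cocycle [f] with [f n] of degree at most [d + 2 - n] is [rho n Y] for some
    [Y] of degree at most [d]: [Y0 = (2 La4 d)^-1 \sum_j L (2 - j) (f (j + 2))]
    solves the equations up to an error of degree one less, and one recurses.
    With [d = 3 k + 3] this gives [Psi (k + 1)] in [U (3 k + 3)]. *)

Lemma is_partition_cons p la :
  is_partition (p :: la) = [&& (0 < p)%N, (head p la <= p)%N & is_partition la].
Proof.
case: la => [|a la]; rewrite /is_partition /= ?leqnn ?andbT //.
by case: (0 < p)%N; rewrite /= ?andbF ?andbA.
Qed.

Lemma linear_subZ (R : comPzRingType) (V : lmodType R) (f : V -> V) (k : R) :
  linear f -> linear (fun u => f u - k *: u).
Proof.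
move=> f_lin a u v; rewrite f_lin scalerDr scalerBr scalerA mulrC -scalerA.
by rewrite addrACA opprD.
Qed.

Section Filtration.
Variables (C : fieldType) (V : lmodType C) (L : int -> {linear V -> V}) (J : V).

Local Notation v_ := (vlam (fun n => L n) J).
Local Notation span := (in_span (fun n => L n) J).

Lemma span0 P : span P 0.
Proof. by exists [::]; rewrite big_nil. Qed.

Lemma spanD P u v : span P u -> span P v -> span P (u + v).
Proof.
move=> [s [hs ->]] [t [ht ->]]; exists (s ++ t).
by rewrite all_cat hs ht big_cat.
Qed.

Lemma spanZ P a v : span P v -> span P (a *: v).
Proof.
move=> [s [hs ->]]; exists [seq (p.1, a * p.2) | p <- s]; rewrite all_map.
split; first exact: sub_all hs.
by rewrite big_map scaler_sumr; apply: eq_bigr => p _; rewrite scalerA.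
Qed.

Lemma spanB P u v : span P u -> span P v -> span P (u - v).
Proof. by move=> hu hv; rewrite -scaleN1r; apply/spanD/spanZ. Qed.

Lemma spanBr P u v : span P v -> span P (u - v) -> span P u.
Proof. by move=> hv huv; rewrite -(subrK v u); apply: spanD. Qed.

Lemma span_sum P (I : eqType) (s : seq I) (f : I -> V) :
  (forall i, i \in s -> span P (f i)) -> span P (\sum_(i <- s) f i).
Proof.
move=> hf; rewrite big_seq; elim/big_rec: _ => [|i v si hv]; first exact: span0.
by apply: spanD => //; apply: hf.
Qed.

Lemma span_weaken (P Q : pred (seq nat)) v :
  (forall la, P la -> Q la) -> span P v -> span Q v.
Proof.
move=> PQ [s [hs ->]]; exists s; split => //.
by apply: sub_all hs => p /andP[-> /PQ].
Qed.

(* The filtration [U_m] of the paper, indexed by integers so that degree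
   shifts need no truncation: [U z] is [0] for [z < 0]. *)
Definition U (z : int) : V -> Prop := span (fun la => (sumn la)%:Z <= z).

Lemma U_le z z' v : z <= z' -> U z v -> U z' v.
Proof. by move=> zz'; apply: span_weaken => la /le_trans; apply. Qed.

Lemma U_lt0 z v : z < 0 -> U z v -> v = 0.
Proof.
move=> z_lt0 [[|p s] [hs ->]]; first by rewrite big_nil.
by move: hs => /andP[/andP[_ hp] _]; lia.
Qed.

Lemma U_vlam la : is_partition la -> U (sumn la) (v_ la).
Proof.
by move=> hla; exists [:: (la, 1)]; rewrite /= hla lexx big_seq1 scale1r.
Qed.

Lemma U_scale a z z' v : (a != 0 -> z <= z') -> U z v -> U z' (a *: v).
Proof.
move=> hz hv; have [->|a0] := eqVneq a 0; first by rewrite scale0r; exact: span0.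
by apply/spanZ/(U_le (hz a0)).
Qed.

Lemma U_linear (f : V -> V) z t : linear f ->
    (forall la, is_partition la -> (sumn la)%:Z <= z -> U t (f (v_ la))) ->
  forall v, U z v -> U t (f v).
Proof.
move=> f_lin hf v [s [hs ->]]; elim: s hs => [|p s IH] /=.
  have := f_lin (-1) 0 0; rewrite scaler0 addr0 scaleN1r addNr big_nil => -> _.
  exact: span0.
move=> /andP[/andP[hp hz] hs]; rewrite big_cons f_lin.
by apply/spanD/IH => //; apply/spanZ/hf.
Qed.

Lemma U0_scaleJ v : U 0 v -> exists a, v = a *: J.
Proof.
move=> [s [hs ->]]; exists (\sum_(p <- s) p.2); rewrite scaler_suml.
apply: eq_big_seq => -[[|a la] x] // /(allP hs) /andP[/andP[_ /andP[a_gt0 _]] /=].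
by lia.
Qed.

Lemma U_xi_split z v : U z v ->
  exists a, xi_is (fun n => L n) J v a /\ U z (v - a *: J).
Proof.
move=> [s [hs ->]]; exists (\sum_(p <- s | p.1 == [::]) p.2); rewrite /xi_is.
set w := \sum_(p <- [seq p <- s | p.1 != [::]]) p.2 *: v_ p.1.
have -> : \sum_(p <- s) p.2 *: v_ p.1 - (\sum_(p <- s | p.1 == [::]) p.2) *: J = w.
  rewrite /w big_filter (bigID (fun p => p.1 == [::])) /= scaler_suml addrAC.
  by rewrite (eq_bigr (fun p => p.2 *: J)) ?subrr ?add0r // => p /eqP ->.
split; exists [seq p <- s | p.1 != [::]]; rewrite all_filter; split=> //.
  by apply/allP => p /(allP hs) /andP[hp _] /=; apply/implyP => ->; rewrite hp.
by apply/allP => p /(allP hs) /= ->; rewrite implybT.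
Qed.

Lemma xi_isB u v a b : xi_is (fun n => L n) J u a -> xi_is (fun n => L n) J v b ->
  xi_is (fun n => L n) J (u - v) (a - b).
Proof.
move=> hu hv; rewrite /xi_is.
have -> : u - v - (a - b) *: J = (u - a *: J) - (v - b *: J).
  by rewrite scalerBl !opprB addrACA [in RHS]addrACA (addrC (- v)).
exact: spanB.
Qed.

Section Basis.
Hypothesis pbw : pbw_basis (fun n => L n) J.

Lemma U_exists v : exists m : nat, U m v.
Proof.
have [s [hs ->]] := pbw.1 v; exists (\max_(p <- s) sumn p.1).
apply: span_sum => p ps; apply/spanZ/(U_le _ (U_vlam (allP hs p ps))).
by rewrite lez_nat; apply: leq_bigmax_seq.
Qed.

Lemma pbw_coef_eq0 (s : seq (seq nat * C)) : all (fun p => is_partition p.1) s ->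
  \sum_(p <- s) p.2 *: v_ p.1 = 0 -> forall la, \sum_(p <- s | p.1 == la) p.2 = 0.
Proof.
move=> hs s0 la; set S := undup [seq p.1 | p <- s].
(* Merge equal partitions: [pbw_basis] only speaks of duplicate-free lists. *)
pose a mu := \sum_(p <- s | p.1 == mu) p.2.
have hS : all is_partition S.
  by apply/allP => mu; rewrite mem_undup => /mapP[p /(allP hs) hp ->].
have aS : \sum_(mu <- S) a mu *: v_ mu = \sum_(p <- s) p.2 *: v_ p.1.
  transitivity (\sum_(mu <- S) \sum_(p <- s) (if p.1 == mu then p.2 *: v_ p.1 else 0)).
    apply: eq_bigr => mu _; rewrite /a scaler_suml big_mkcond /=.
    by apply: eq_bigr => p _; case: eqP => // ->.
  rewrite exchange_big /=; apply: eq_big_seq => p ps.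
  have pS : p.1 \in S by rewrite mem_undup; apply: map_f.
  rewrite (bigD1_seq p.1 pS (undup_uniq _)) /= eqxx big1 ?addr0 // => mu.
  by rewrite eq_sym => /negbTE ->.
have [laS|laNS] := boolP (la \in S).
  exact: pbw.2 S a (undup_uniq _) hS (etrans aS s0) la laS.
rewrite big1_seq // => p /andP[/eqP p_la ps]; case/negP: laNS.
by rewrite mem_undup -p_la; apply: map_f.
Qed.

Lemma xi_is_scaleJ a b : xi_is (fun n => L n) J (a *: J) b -> a = b.
Proof.
rewrite /xi_is -scalerBl => -[s [hs sE]].
have hs' : all (fun p => is_partition p.1) (([::], - (a - b)) :: s).
  by apply/allP => -[la x] /predU1P[[-> _] // | /(allP hs) /= /andP[]].
have := pbw_coef_eq0 hs' _ [::]; rewrite !big_cons /= -sE scaleNr addNr.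
rewrite big1_seq => [/(_ erefl)|]; last first.
  by move=> -[la x] /andP[/= /eqP -> /(allP hs)].
by rewrite addr0 => /eqP; rewrite oppr_eq0 subr_eq0 => /eqP.
Qed.

End Basis.

End Filtration.

Section Whittaker.
Variables (C : numFieldType) (V : lmodType C) (c : C).
Variables (L : int -> {linear V -> V}) (J : V) (La2 La3 La4 : C).
Hypothesis vir : virasoro_rel c (fun n => L n).

Local Notation v_ := (vlam (fun n => L n) J).
Local Notation U := (U L J).
Local Notation U_vlam := (@U_vlam _ _ L J _).
(* The eigenvalue of the Euler operator on the top part of degree [z]. *)
Local Notation ev z := (2%:R * La4 * (z)%:~R).

Definition central (m n : int) : C :=
  if m + n == 0 then c / 12%:R * (m ^+ 3 - m)%:~R else 0.

Lemma central_neq0 m n : central m n != 0 -> m + n = 0.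
Proof. by rewrite /central; case: (m + n =P 0) => // _; rewrite eqxx. Qed.

Lemma L_swap m n v :
  L m (L n v) = L n (L m v) + ((m - n)%:~R *: L (m + n) v + central m n *: v).
Proof. by move/eqP: (vir m n v); rewrite subr_eq addrC => /eqP. Qed.

Lemma creation_vlam N p la : (0 < p)%N -> is_partition la -> (sumn la + p <= N)%N ->
  U N (L (2%:Z - p%:Z) (v_ la)).
Proof.
(* Induction on [N] and, for fixed [N], downwards on [p]: if the first part [a]
   of [la] exceeds [p], commute [L (2 - p)] past [L (2 - a)]. *)
elim/ltn_ind: N p la => N IHN.
have IHU q z v : (0 < q)%N -> z + q%:Z < N%:Z -> U z v -> U (z + q%:Z) (L (2%:Z - q%:Z) v).
  move=> q_gt0 zqN; apply: (U_linear (linearP _)) => mu hmu muz.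
  have mu_lt : (sumn mu + q < N)%N by lia.
  by apply: (U_le _ (IHN _ mu_lt q mu q_gt0 hmu (leqnn _))); lia.
move=> p la; move Ek : (N - p)%N => k.
elim/ltn_ind: k p la Ek => k IHk p [|a mu] Ek p_gt0 hla hN.
  have hp : is_partition [:: p] by rewrite is_partition_cons p_gt0 /= leqnn.
  by apply: (U_le _ (U_vlam hp)); rewrite /=; lia.
have [ap|pa] := leqP a p.
  have hp : is_partition [:: p, a & mu] by rewrite is_partition_cons p_gt0 ap.
  by apply: (U_le _ (U_vlam hp)); move: hN => /=; lia.
move: (hla) hN; rewrite is_partition_cons /= => /and3P[a_gt0 _ hmu] hN.
rewrite L_swap; apply: spanD; last apply: spanD.
- apply: (U_linear (linearP _) _ (IHU p (sumn mu) _ p_gt0 _ (U_vlam hmu))) => [nu hnu nuz|].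
    by apply: (IHk (N - a)%N _ a nu erefl) => //; lia.
  by lia.
- have -> : (2%:Z - p%:Z) + (2%:Z - a%:Z) = 2%:Z - (p + a - 2)%N%:Z by lia.
  by apply/spanZ/(U_le _ (IHU _ _ _ _ _ (U_vlam hmu))); lia.
- by apply: U_scale (U_vlam hmu) => _; lia.
Qed.

Lemma creation_U k z v : k <= 1 -> U z v -> U (z + 2%:Z - k) (L k v).
Proof.
move=> k_le1; have [p p_gt0 ->] : exists2 p : nat, (0 < p)%N & k = 2%:Z - p%:Z.
  by exists `|2 - k|%N; lia.
apply: (U_linear (linearP _)) => la hla laz.
by apply: (U_le _ (creation_vlam p_gt0 hla (leqnn _))); lia.
Qed.

Hypotheses (LJ2 : L 2%:Z J = La2 *: J) (LJ3 : L 3%:Z J = La3 *: J).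
Hypotheses (LJ4 : L 4%:Z J = La4 *: J) (LJ_gt4 : forall n : int, 4%:Z < n -> L n J = 0).

Definition Lam (n : int) : C :=
  if n == 2%:Z then La2 else if n == 3%:Z then La3 else if n == 4%:Z then La4 else 0.

(* Locked, so that rewriting with linearity lemmas does not unfold it. *)
Fact rho_key : unit. Proof. by []. Qed.
Definition rho : int -> V -> V :=
  locked_with rho_key (fun n v => L n v - Lam n *: v).

Lemma rhoE n v : rho n v = L n v - Lam n *: v.
Proof. by rewrite /rho unlock. Qed.

Fact rho_is_linear n : linear (rho n).
Proof. by move=> a u w; rewrite !rhoE; exact: (linear_subZ (Lam n) (linearP (L n))). Qed.

HB.instance Definition _ n :=
  GRing.isLinear.Build C V V *:%R (rho n) (rho_is_linear n).

Lemma L_rho n v : L n v = rho n v + Lam n *: v.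
Proof. by rewrite rhoE subrK. Qed.

Lemma Lam_neq0 n : Lam n != 0 -> 2%:Z <= n <= 4%:Z.
Proof.
rewrite /Lam; case: (n =P 2%:Z) => [-> //|_]; case: (n =P 3%:Z) => [-> //|_].
by case: (n =P 4%:Z) => [-> //|_]; rewrite eqxx.
Qed.

Lemma rho_L n v : (n < 2%:Z) || (4%:Z < n) -> rho n v = L n v.
Proof.
move=> n_out; rewrite rhoE; have [->|/Lam_neq0] := eqVneq (Lam n) 0.
  by rewrite scale0r subr0.
by lia.
Qed.

Lemma rho_J n : 2%:Z <= n -> rho n J = 0.
Proof.
move=> n_ge2; rewrite rhoE /Lam.
case: (n =P 2%:Z) => [->|n2]; first by rewrite LJ2 subrr.
case: (n =P 3%:Z) => [->|n3]; first by rewrite LJ3 subrr.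
case: (n =P 4%:Z) => [->|n4]; first by rewrite LJ4 subrr.
by rewrite scale0r subr0 LJ_gt4 //; lia.
Qed.

Lemma rho_L_comm m n v : rho m (L n v) - L n (rho m v) = L m (L n v) - L n (L m v).
Proof. by rewrite !rhoE [L n (_ - _)]linearB [L n (_ *: _)]linearZ opprB addrA subrK. Qed.

(* Up to one degree less than the naive bound, [L m, L n] acts as
   [(m - n) Lam (m + n)]; this survives only for [m + n = 4]. *)
Lemma commutator_top_of_rho m n z u : U z u -> U (z + 2%:Z - (m + n)) (rho (m + n) u) ->
  U (z + 3%:Z - (m + n))
    (L m (L n u) - L n (L m u) - (if m + n == 4%:Z then ev (m - 2%:Z) else 0) *: u).
Proof.
move=> hu hrho.
have -> : L m (L n u) - L n (L m u) - (if m + n == 4%:Z then ev (m - 2%:Z) else 0) *: u =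
    (m - n)%:~R *: rho (m + n) u +
    (((m - n)%:~R * Lam (m + n) - (if m + n == 4%:Z then ev (m - 2%:Z) else 0)) *: u +
     central m n *: u).
  by rewrite vir L_rho scalerDr scalerA scalerBl !addrA addrAC.
apply: spanD; first by apply/spanZ/(U_le _ hrho); lia.
apply: spanD; last by apply: U_scale hu => /central_neq0; lia.
apply: U_scale hu; have [mn4|mn4] := eqVneq (m + n) 4%:Z.
  have top0 : (m - n)%:~R * La4 - ev (m - 2%:Z) = 0.
    by rewrite (_ : n = 4%:Z - m); [rewrite !rmorphB /=; ring | lia].
  by rewrite mn4 /Lam /= top0 eqxx.
by rewrite subr0 mulf_eq0 negb_or => /andP[_ /Lam_neq0]; lia.
Qed.

Lemma rho_vlam la : is_partition la -> forall k, U ((sumn la)%:Z + 2%:Z - k) (rho k (v_ la)).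
Proof.
elim: la => [|p la IH] hla k.
  have [k_ge2|k_lt2] := lerP 2%:Z k; first by rewrite rho_J //; exact: span0.
  by rewrite rho_L ?k_lt2 //; apply: (U_le _ (creation_U _ (U_vlam hla))); lia.
move: (hla); rewrite is_partition_cons => /and3P[p_gt0 _ hla'].
rewrite /= -[rho k _](subrK (L (2%:Z - p%:Z) (rho k (v_ la)))) rho_L_comm.
apply: spanD; last by apply: (U_le _ (creation_U _ (IH hla' k))); lia.
apply: (spanBr _ (U_le _ (commutator_top_of_rho (U_vlam hla') (IH hla' _)))); last by lia.
by apply: U_scale (U_vlam hla'); case: ifP => [/eqP ? _|_]; [lia | rewrite eqxx].
Qed.

Lemma rho_U k z v : U z v -> U (z + 2%:Z - k) (rho k v).
Proof.
apply: (U_linear (linearP _)) => la hla laz.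
by apply: (U_le _ (rho_vlam hla k)); lia.
Qed.

Lemma commutator_top m n z u : U z u ->
  U (z + 3%:Z - (m + n))
    (L m (L n u) - L n (L m u) - (if m + n == 4%:Z then ev (m - 2%:Z) else 0) *: u).
Proof. by move=> hu; apply: commutator_top_of_rho hu (rho_U _ hu). Qed.

Lemma rho_comm m n v : 3%:Z <= m -> 3%:Z <= n ->
  rho m (rho n v) - rho n (rho m v) = (m - n)%:~R *: rho (m + n) v.
Proof.
move=> m_ge3 n_ge3.
have -> : rho m (rho n v) = rho m (L n v) - Lam n *: rho m v.
  by rewrite [rho n v]rhoE linearB linearZZ.
rewrite [rho n (rho m v)]rhoE opprB addrA subrK rho_L_comm vir rho_L; last by lia.
by rewrite /central (_ : m + n == 0 = false) ?scale0r ?addr0 //; lia.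
Qed.

Definition euler (N : nat) (v : V) : V :=
  \sum_(j <- iota 1 N) L (2%:Z - j%:Z) (rho (j%:Z + 2%:Z) v).

Fact euler_is_linear N : linear (euler N).
Proof.
move=> a u v; rewrite /euler scaler_sumr -big_split.
by apply: eq_bigr => j _; rewrite !linearP.
Qed.

Lemma euler_whittaker N v : (forall n : int, 3%:Z <= n -> rho n v = 0) -> euler N v = 0.
Proof.
move=> whv; rewrite /euler big1_seq // => j /andP[_]; rewrite mem_iota => /andP[j_gt0 _].
by rewrite whv ?linear0 //; lia.
Qed.

Lemma euler_term p j m v : (0 < j)%N -> U m v ->
  U (m + p%:Z - 1)
    (L (2%:Z - j%:Z) (rho (j%:Z + 2%:Z) (L (2%:Z - p%:Z) v))
     - L (2%:Z - p%:Z) (L (2%:Z - j%:Z) (rho (j%:Z + 2%:Z) v))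
     - (if j == p then ev p else 0) *: L (2%:Z - p%:Z) v).
Proof.
move=> j_gt0 hv.
(* Commute [rho (j + 2)] past [L (2 - p)], then [L (2 - j)] past [L (2 - p)]. *)
have top_eq : (if j%:Z + 2%:Z + (2%:Z - p%:Z) == 4%:Z then ev (j%:Z + 2%:Z - 2%:Z) else 0)
    *: L (2%:Z - j%:Z) v = (if j == p then ev p else 0) *: L (2%:Z - p%:Z) v.
  have [<-|jp] := eqVneq j p; last first.
    rewrite (_ : (_ == 4%:Z) = false); last by apply/eqP; lia.
    by rewrite !scale0r.
  by rewrite (_ : (_ == 4%:Z) = true) ?addrK //; apply/eqP; lia.
have h1 := creation_U (k := 2%:Z - j%:Z) _ (commutator_top (j%:Z + 2%:Z) (2%:Z - p%:Z) hv).
rewrite -rho_L_comm [L _ _]linearB [L _ (_ - _)]linearB [L _ (_ *: _)]linearZZ top_eq in h1.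
have h2 := commutator_top (2%:Z - j%:Z) (2%:Z - p%:Z) (rho_U (j%:Z + 2%:Z) hv).
rewrite (_ : (_ == 4%:Z) = false) ?scale0r ?subr0 in h2; last by apply/eqP; lia.
set u1 := L _ (rho _ (L _ v)) in h1 *; set u2 := L (2%:Z - p%:Z) (L _ _) in h2 *.
set u3 := L (2%:Z - j%:Z) (L _ _) in h1 h2.
rewrite -(subrKA u3 u1 (- u2)) [u1 - u3 + _ - _]addrAC.
by apply: spanD; [apply: (U_le _ (h1 _)) | apply: (U_le _ h2)]; lia.
Qed.

Lemma euler_cons N p m v : (0 < p <= N)%N -> U m v ->
    U (m - 1) (euler N v - ev m *: v) ->
  U (m + p%:Z - 1) (euler N (L (2%:Z - p%:Z) v) - ev (m + p%:Z) *: L (2%:Z - p%:Z) v).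
Proof.
move=> /andP[p_gt0 p_le] hv hE.
have H1 := creation_U (k := 2%:Z - p%:Z) _ hE.
rewrite [L _ (_ - _)]linearB [L _ (_ *: _)]linearZZ in H1.
have H2 : U (m + p%:Z - 1) (euler N (L (2%:Z - p%:Z) v) - L (2%:Z - p%:Z) (euler N v)
                            - ev p *: L (2%:Z - p%:Z) v).
  have -> : ev p *: L (2%:Z - p%:Z) v =
      \sum_(j <- iota 1 N) (if j == p then ev p else 0) *: L (2%:Z - p%:Z) v.
    rewrite (bigD1_seq p) ?iota_uniq ?mem_iota //=; last by lia.
    by rewrite eqxx big1 ?addr0 // => j /negbTE ->; rewrite scale0r.
  rewrite /euler linear_sum -!sumrB; apply: span_sum => j.
  by rewrite mem_iota => /andP[j_gt0 _]; apply: euler_term.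
have := spanD (U_le _ (H1 _)) H2; rewrite addrACA subrKC -opprD -scalerDl -mulrDr -intrD.
by apply; lia.
Qed.

Lemma euler_vlam N la : is_partition la -> (sumn la <= N)%N ->
  U ((sumn la)%:Z - 1) (euler N (v_ la) - ev (sumn la)%:Z *: v_ la).
Proof.
elim: la => [|p la IH] hla laN.
  rewrite mulr0 scale0r subr0 euler_whittaker; first exact: span0.
  by move=> n n_ge3; apply: rho_J; lia.
move: (hla) laN; rewrite is_partition_cons /= => /and3P[p_gt0 _ hla'] laN.
rewrite PoszD [p%:Z + _]addrC; apply: euler_cons (U_vlam hla') (IH hla' _); lia.
Qed.

Lemma euler_U N z v : z <= N%:Z -> U z v -> U (z - 1) (euler N v - ev z *: v).
Proof.
move=> zN; apply: (U_linear (linear_subZ _ (@euler_is_linear N))) => la hla laz.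
rewrite -(subrK (ev (sumn la)%:Z *: v_ la) (euler N _)) -addrA -scalerBl.
apply: spanD; first by apply: (U_le _ (euler_vlam hla _)); lia.
apply: U_scale (U_vlam hla).
by have [->|] := eqVneq (sumn la)%:Z z; [rewrite subrr eqxx | lia].
Qed.

Hypothesis La4_neq0 : La4 != 0.

Lemma ev_neq0 z : z != 0 -> ev z != 0.
Proof. by move=> z_neq0; rewrite !mulf_neq0 ?pnatr_eq0 ?intr_eq0. Qed.

Lemma whittaker_U0 (m : nat) v :
  U m v -> (forall n : int, 3%:Z <= n -> rho n v = 0) -> U 0 v.
Proof.
elim: m v => [//|m IH] v hv whv; apply: (IH _ _ whv).
have := euler_U (lexx _) hv; rewrite (euler_whittaker _ whv) sub0r.
move=> /(spanZ (- (ev m.+1)^-1)).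
by rewrite scalerN scaleNr opprK scalerA mulVf ?scale1r; [apply: U_le; lia | exact: ev_neq0].
Qed.

Definition cocycle (f : int -> V) : Prop :=
  forall m n, 3%:Z <= m -> 3%:Z <= n -> rho m (f n) - rho n (f m) = (m - n)%:~R *: f (m + n).

Lemma cocycle_rho v : cocycle (fun n => rho n v).
Proof. by move=> m n m_ge3 n_ge3; apply: rho_comm. Qed.

Lemma cocycleB f g : cocycle f -> cocycle g -> cocycle (fun n => f n - g n).
Proof.
move=> cf cg m n m_ge3 n_ge3 /=.
rewrite [rho m _]linearB [rho n _]linearB scalerBr -cf // -cg //.
by rewrite !opprB addrACA [in RHS]addrACA [- rho n _ + _]addrC.
Qed.

Section Lift.
Variables (D : nat) (f : int -> V).
Hypothesis f_cocycle : cocycle f.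
Hypothesis f_U : forall n, 3%:Z <= n -> U (D%:Z + 2%:Z - n) (f n).

Lemma lift_term m j : 3%:Z <= m -> (0 < j)%N ->
  U (D%:Z + 1 - m)
    (rho m (L (2%:Z - j%:Z) (f (j%:Z + 2%:Z)))
     - L (2%:Z - j%:Z) (rho (j%:Z + 2%:Z) (f m))
     - (if j%:Z + 2%:Z == m then ev j else 0) *: f m).
Proof.
move=> m_ge3 j_gt0.
(* The cocycle identity trades [rho m (f (j + 2))] for [rho (j + 2) (f m)]. *)
have top_eq : (if m + (2%:Z - j%:Z) == 4%:Z then ev (m - 2%:Z) else 0) *: f (j%:Z + 2%:Z)
    = (if j%:Z + 2%:Z == m then ev j else 0) *: f m.
  have [<-|jm] := eqVneq (j%:Z + 2%:Z) m; last first.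
    by rewrite (_ : (_ == 4%:Z) = false) ?scale0r //; apply/eqP; lia.
  by rewrite (_ : (_ == 4%:Z) = true) ?addrK //; apply/eqP; lia.
have h1 := creation_U (k := 2%:Z - j%:Z) _
  (spanZ ((m - (j%:Z + 2%:Z))%:~R) (@f_U (m + (j%:Z + 2%:Z)) _)).
have j2_ge3 : 3%:Z <= j%:Z + 2%:Z by lia.
rewrite -(f_cocycle m_ge3 j2_ge3) [L _ (_ - _)]linearB in h1.
have h2 := commutator_top m (2%:Z - j%:Z) (@f_U (j%:Z + 2%:Z) _).
rewrite -rho_L_comm top_eq in h2.
set u1 := rho m _ in h2 *; set u2 := L _ (rho _ (f m)) in h1 *.
set u3 := L (2%:Z - j%:Z) (rho m _) in h1 h2.
rewrite -(subrKA u3 u1 (- u2)) [u1 - u3 + _ - _]addrAC.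
by apply: spanD; [apply: (U_le _ (h2 _)) | apply: (U_le _ (h1 _ _))]; lia.
Qed.

Lemma rho_lift m : 3%:Z <= m ->
  U (D%:Z + 1 - m)
    (rho m (\sum_(j <- iota 1 D) L (2%:Z - j%:Z) (f (j%:Z + 2%:Z))) - ev D *: f m).
Proof.
move=> m_ge3; have [k mk] : exists k : nat, m = k%:Z + 2%:Z by exists `|m - 2%:Z|%N; lia.
have sum_top : \sum_(j <- iota 1 D) (if j%:Z + 2%:Z == m then ev j else 0) *: f m
    = ev k *: f m.
  have [kD|Dk] := leqP k D; last first.
    rewrite (U_lt0 _ (f_U m_ge3)) ?scaler0 ?big1 // => [j _|]; [exact: scaler0 | lia].
  have k_in : k \in iota 1 D by rewrite mem_iota; lia.
  rewrite (bigD1_seq k) ?iota_uniq //= mk eqxx big1 ?addr0 // => j /negbTE jk.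
  by rewrite (inj_eq (addIr _)) eqz_nat jk scale0r.
have H1 : U (D%:Z + 1 - m)
    (rho m (\sum_(j <- iota 1 D) L (2%:Z - j%:Z) (f (j%:Z + 2%:Z)))
     - euler D (f m) - ev k *: f m).
  rewrite -sum_top /euler linear_sum -!sumrB; apply: span_sum => j.
  by rewrite mem_iota => /andP[j_gt0 _]; apply: lift_term.
have H2 : U (D%:Z + 1 - m) (euler D (f m) - ev (D%:Z + 2%:Z - m) *: f m).
  by apply: (U_le _ (euler_U _ (f_U m_ge3))); lia.
set a := rho m _ in H1 *.
move: (spanD H1 H2); rewrite [a - _ - _]addrAC subrKA -[a - _ - _]addrA -opprD.
rewrite -scalerDl -mulrDr -intrD (_ : k%:Z + (D%:Z + 2%:Z - m) = D%:Z) //; lia.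
Qed.

End Lift.

Lemma cocycle_exact (d : nat) f : cocycle f ->
    (forall n, 3%:Z <= n -> U (d%:Z + 2%:Z - n) (f n)) ->
  exists2 Y, U d Y & forall n, 3%:Z <= n -> rho n Y = f n.
Proof.
elim: d f => [|d IH] f f_cocycle f_U.
  exists 0; first exact: span0.
  by move=> n n_ge3; rewrite linear0 (U_lt0 _ (f_U _ n_ge3)) //; lia.
(* [Y0] solves the equations up to an error of lower degree ([rho_lift]). *)
pose Y0 := (ev d.+1)^-1 *: \sum_(j <- iota 1 d.+1) L (2%:Z - j%:Z) (f (j%:Z + 2%:Z)).
have Y0_U : U d.+1 Y0.
  apply/spanZ/span_sum => j; rewrite mem_iota => /andP[j_gt0 _].
  by apply: (U_le _ (creation_U _ (f_U _ _))); lia.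
have [|n n_ge3|Y1 Y1_U rho_Y1] := IH (fun n => f n - rho n Y0).
- exact/cocycleB/cocycle_rho.
- have -> : f n - rho n Y0 = (- (ev d.+1)^-1) *:
      (rho n (\sum_(j <- iota 1 d.+1) L (2%:Z - j%:Z) (f (j%:Z + 2%:Z))) - ev d.+1 *: f n).
    rewrite /Y0 linearZZ scalerBr scalerA mulNr mulVf ?ev_neq0 //.
    by rewrite scaleN1r opprK scaleNr addrC.
  by apply: (U_le _ (spanZ _ (rho_lift f_cocycle f_U n_ge3))); lia.
exists (Y0 + Y1); first by apply: spanD => //; apply: U_le Y1_U; lia.
by move=> n n_ge3; rewrite linearD /= rho_Y1 // addrC subrK.
Qed.

Definition next_spec (k : nat) (b b' : V) : Prop :=
  [/\ U (3 * k.+1)%N b', xi_is (fun n => L n) J b' 0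
    & forall n : int, 3%:Z <= n -> rho n b' = if n == 5%:Z then b else 0].

Lemma next_exists k b : U (3 * k)%N b ->
    (forall n : int, 3%:Z <= n -> n != 5%:Z -> rho n b = 0) ->
  exists b', next_spec k b b'.
Proof.
move=> b_U b_whitt; pose f n : V := if n == 5%:Z then b else 0.
have f5 : f 5%:Z = b by rewrite /f eqxx.
have fN n : n != 5%:Z -> f n = 0 by rewrite /f => /negbTE ->.
clearbody f.
have f_cocycle : cocycle f.
  move=> m n m_ge3 n_ge3; rewrite (fN (m + n)) ?scaler0; last by apply/eqP; lia.
  have [->|m5] := eqVneq m 5%:Z; have [->|n5] := eqVneq n 5%:Z.
  - by rewrite subrr.
  - by rewrite f5 (fN n) // linear0 b_whitt // subrr.
  - by rewrite f5 (fN m) // linear0 b_whitt // subrr.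
  - by rewrite (fN n) // (fN m) // !linear0 ?subr0 ?addr0.
have f_U n : 3%:Z <= n -> U ((3 * k.+1)%N%:Z + 2%:Z - n) (f n).
  move=> _; have [->|n5] := eqVneq n 5%:Z; last by rewrite fN //; exact: span0.
  by rewrite f5; apply: U_le b_U; lia.
have [Y Y_U rho_Y] := cocycle_exact f_cocycle f_U.
have [a [xi_Y Y_aJ]] := U_xi_split Y_U.
exists (Y - a *: J); split=> //; first by rewrite /xi_is scale0r subr0.
move=> n n_ge3; rewrite linearB linearZZ /= rho_J ?scaler0 ?subr0 ?rho_Y //; last by lia.
by have [->|n5] := eqVneq n 5%:Z; [rewrite f5 | rewrite fN].
Qed.

(* A choice of solution; [next_exists] makes it a genuine one along [Psi]. *)
Definition next (k : nat) (b : V) : V := epsilon (inhabits 0) (next_spec k b).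

Fixpoint Psi (k : nat) : V := if k is k'.+1 then next k' (Psi k') else J.

Lemma Psi_spec k :
  [/\ U (3 * k)%N (Psi k), xi_is (fun n => L n) J (Psi k) (if k == 0%N then 1 else 0)
    & forall n : int, 3%:Z <= n ->
        rho n (Psi k) = if n == 5%:Z then (if k is k'.+1 then Psi k' else 0) else 0].
Proof.
elim: k => [|k [Psi_U _ rho_Psi]].
  split; first exact: (U_vlam (isT : is_partition [::])).
    by rewrite /xi_is scale1r subrr; exact: span0.
  by move=> n n_ge3; rewrite rho_J ?if_same //; lia.
apply: (epsilon_spec (inhabits 0) (next_spec k (Psi k))).
by apply: next_exists Psi_U _ => n n_ge3 /negbTE n5; rewrite rho_Psi // n5.
Qed.

Lemma solvesE P : solves (fun n => L n) J La3 La4 P <->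
  P 0%N = J /\ forall k (n : int), 3%:Z <= n ->
    rho n (P k) = if n == 5%:Z then (if k is k'.+1 then P k' else 0) else 0.
Proof.
split=> [[P0 [P3 [P4 [P5 P_gt5]]]]|[P0 rhoP]].
  split=> // k n n_ge3; have [->|n5] := eqVneq n 5%:Z; first by rewrite rho_L ?P5.
  have [->|n3] := eqVneq n 3%:Z; first by rewrite rhoE P3 subrr.
  have [->|n4] := eqVneq n 4%:Z; first by rewrite rhoE P4 subrr.
  by rewrite rho_L ?P_gt5 //; lia.
split=> //; split; [|split; [|split]].
- by move=> k; apply/eqP; rewrite -subr_eq0 -[La3]/(Lam 3%:Z) -rhoE rhoP.
- by move=> k; apply/eqP; rewrite -subr_eq0 -[La4]/(Lam 4%:Z) -rhoE rhoP.
- by move=> k; rewrite -rho_L ?rhoP.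
- move=> n k n_gt5; rewrite -rho_L ?rhoP; [|lia|lia].
  by rewrite (_ : n == 5%:Z = false) //; apply/eqP; lia.
Qed.

Lemma Psi_solves : solves (fun n => L n) J La3 La4 Psi.
Proof. by apply/solvesE; split=> // k; case: (Psi_spec k). Qed.

Lemma Psi_xi k : xi_is (fun n => L n) J (Psi k) (if k == 0%N then 1 else 0).
Proof. by case: (Psi_spec k). Qed.

Lemma Psi_in_U k : in_U (fun n => L n) J (3 * k) (Psi k).
Proof. by case: (Psi_spec k) => Psi_U _ _; exact: Psi_U. Qed.

Hypothesis pbw : pbw_basis (fun n => L n) J.

Lemma Psi_unique P : solves (fun n => L n) J La3 La4 P ->
    (forall k, xi_is (fun n => L n) J (P k) (if k == 0%N then 1 else 0)) ->
  forall k, P k = Psi k.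
Proof.
move=> /solvesE[P0 rhoP] xiP; elim=> [//|k IH].
have [_ Psi_xi rho_Psi] := Psi_spec k.+1.
set D := P k.+1 - Psi k.+1.
have D_whitt n : 3%:Z <= n -> rho n D = 0.
  by move=> n_ge3; rewrite linearB /= rhoP // rho_Psi // IH subrr.
have [m D_U] := U_exists pbw D.
have [a Da] := U0_scaleJ (whittaker_U0 D_U D_whitt).
have := xi_isB (xiP k.+1) Psi_xi; rewrite subrr -/D Da => /(xi_is_scaleJ pbw) a0.
by apply/eqP; rewrite -subr_eq0 -/D Da a0 scale0r.
Qed.

End Whittaker.

Theorem theoremA1 (R : realType) (V : lmodType R[i]) (c : R[i])
    (L : int -> {linear V -> V}) (J : V) (La2 La3 La4 : R[i]) :
  La4 != 0 ->
  virasoro_rel c (fun n => L n) ->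
  L 2%:Z J = La2 *: J -> L 3%:Z J = La3 *: J -> L 4%:Z J = La4 *: J ->
  (forall n : int, 4%:Z < n -> L n J = 0) ->
  pbw_basis (fun n => L n) J ->
  (* (1) existence *)
  (exists Psi : nat -> V, solves (fun n => L n) J La3 La4 Psi) /\
  (* (2) existence with Psi_k in U_{3k} *)
  (exists Psi : nat -> V, solves (fun n => L n) J La3 La4 Psi /\
     forall k, in_U (fun n => L n) J (3 * k) (Psi k)) /\
  (* (3) uniqueness under the gauge xi(Psi_k) = delta_{k,0}; the solution lies in U_{3k} *)
  (exists Psi : nat -> V,
     solves (fun n => L n) J La3 La4 Psi /\
     (forall k, xi_is (fun n => L n) J (Psi k) (if k == 0%N then 1 else 0)) /\
     (forall k, in_U (fun n => L n) J (3 * k) (Psi k)) /\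
     (forall Psi' : nat -> V,
        solves (fun n => L n) J La3 La4 Psi' ->
        (forall k, xi_is (fun n => L n) J (Psi' k) (if k == 0%N then 1 else 0)) ->
        forall k, Psi' k = Psi k)).
Proof.
move=> La4_neq0 vir LJ2 LJ3 LJ4 LJ_gt4 pbw.
have sol := Psi_solves vir LJ2 LJ3 LJ4 LJ_gt4 La4_neq0.
have deg := Psi_in_U vir LJ2 LJ3 LJ4 LJ_gt4 La4_neq0.
split; first by exists (Psi L J La2 La3 La4).
split; first by exists (Psi L J La2 La3 La4).
exists (Psi L J La2 La3 La4); split=> //; split; first exact: Psi_xi.
by split=> // P; apply: Psi_unique.
Qed.
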